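(* Let $0<\omega_1<\omega_2<\cdots$, let $(c_j)$ be a real square-summable sequence with $c_j\ne0$ for all $j$, $\gamma>0$, and $f(\lambda)=\sum_{j}\frac{c_j^2}{\omega_j}\big(\frac1{\lambda-i\omega_j}-\frac1{\lambda+i\omega_j}\big)+\frac{2i}{\gamma\lambda}$. For $k\ge2$ let $F_k(\lambda)=(\lambda-i\omega_k)f(\lambda)$, $\lambda_k^*=i\omega_k-F_k(i\omega_k)/F_k'(i\omega_k)$, and $\rho_k$ be defined by $F_k(\lambda)=F_k(i\omega_k)+(\lambda-i\omega_k)F_k'(i\omega_k)+(\lambda-i\omega_k)^2\rho_k(\lambda)$. Suppose there is $k_1$ such that for every $k\ge k_1$: $\omega_k>1$, $\omega_{k+1}-\omega_k>\omega_k-\omega_{k-1}$, and there are $0<R_1^{(k)}<\omega_k-\omega_{k-1}$ and $R_k>0$ with: $M_k:=\sup_{|\lambda-i\omega_k|\le R_1^{(k)}}|\rho_k(\lambda)|$ satisfies $0<M_k<\frac{\gamma\omega_k|F_k'(i\omega_k)|^3}{c_k^2(\gamma\omega_k|F_k'(i\omega_k)|+1)^2}$; $\sqrt{R_k}\in(b_k-\sqrt{b_k^2-d_k},\,b_k+\sqrt{b_k^2-d_k})$ where $b_k=\sqrt{|F_k'(i\omega_k)|/(4M_k)}$, $d_k=|F_k(i\omega_k)/F_k'(i\omega_k)|$; $R_k\le\frac12|\mathrm{Re}\,\lambda_k^*|$; and $\{|\lambda-\lambda_k^*|<R_k\}\subset\{|\lambda-i\omega_k|\le R_1^{(k)}\}$.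 Let $\lambda_k$ be the unique zero of $f$ in $\{|\lambda-\lambda_k^*|<R_k\}$ (an eigenvalue of the operator $A$ below, as is $\bar\lambda_k$). Then $$\lambda_k=i\omega_k+O(c_k^2),\qquad \bar\lambda_k=-i\omega_k+O(c_k^2)\qquad (k\to\infty).$$
   Context: $A$ is the operator on the complex space $H=\ell^2\times\ell^2$ given by $A(q,p)=(-i\Omega q+\check Aq+\check Ap,\ \check Aq+i\Omega p+\check Ap)$ with $\Omega=\mathrm{diag}(\omega_j)$, $(\check Ax)_j=-\frac\gamma2c_j\sum_\iota c_\iota x_\iota$, domain $\{(q,p):\sum_j\omega_j^2(|q_j|^2+|p_j|^2)<\infty\}$; its eigenvalues off $\{0,\pm i\omega_j\}$ are the zeros of $f$. *)

From Stdlib Require Import Reals.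
From Coquelicot Require Import Coquelicot.
Open Scope C_scope.

(* Index shift: om j, c j here are the paper's omega_(j+1), c_(j+1). *)

Definition fterm (c om : nat -> R) (j : nat) (z : C) : C :=
  RtoC (c j ^ 2 / om j) * (/ (z - Ci * RtoC (om j)) - / (z + Ci * RtoC (om j))).

Definition CSeries (a : nat -> C) : C :=
  (Series (fun n => Re (a n)), Series (fun n => Im (a n))).

(* f(z) = sum_j fterm j z + 2 i /(gamma z), as a total function (junk at poles). *)
Definition f (c om : nat -> R) (gamma : R) (z : C) : C :=
  CSeries (fun j => fterm c om j z) + 2 * Ci / (RtoC gamma * z).

Definition is_zero_f (c om : nat -> R) (gamma : R) (z : C) : Prop :=
  z <> 0 /\ (forall j, z <> Ci * RtoC (om j) /\ z <> - (Ci * RtoC (om j))) /\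
  exists s : C, @is_series C_AbsRing C_NormedModule (fun j => fterm c om j z) s /\
               s + 2 * Ci / (RtoC gamma * z) = 0.

(* F_k(z) = (z - i omega_k) f(z), written with the removable singularity at
   i omega_k cancelled: (z - i om_k) * c_k^2/om_k * 1/(z - i om_k) = c_k^2/om_k. *)
Definition Fk (c om : nat -> R) (gamma : R) (k : nat) (z : C) : C :=
  RtoC (c k ^ 2 / om k) +
  (z - Ci * RtoC (om k)) *
    (CSeries (fun j => if Nat.eqb j k then 0 else fterm c om j z)
     - RtoC (c k ^ 2 / om k) / (z + Ci * RtoC (om k))
     + 2 * Ci / (RtoC gamma * z)).

(** On the imaginary axis every summand of f is purely imaginary, so there
    Im F_k(i y) = (y - omega_k) * 2/(gamma y) exactly.  Comparing this with the
    Taylor expansion of F_k at i omega_k, evaluated at a point i(omega_k + t) of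
    the disc where |rho_k| <= M_k, gives Re F_k'(i omega_k) >= 1/(2 gamma omega_k).
    Since F_k(i omega_k) = c_k^2/omega_k, the Newton step lambda_k^* - i omega_k
    has modulus at most 2 gamma c_k^2, and lambda_k lies within R_k <= half of
    that distance of lambda_k^*. *)

From Stdlib Require Import Reals Lra Psatz.
From Coquelicot Require Import Coquelicot.
Open Scope C_scope.

Lemma Rabs_Im_le_Cmod (z : C) : (Rabs (Im z) <= Cmod z)%R.
Proof.
  unfold Cmod. rewrite <- sqrt_Rsqr_abs. apply sqrt_le_1_alt.
  unfold Rsqr. destruct z as [x y]; simpl. nra.
Qed.

Lemma Re_CSeries_eq0 (a : nat -> C) :
  (forall n, Re (a n) = 0%R) -> Re (CSeries a) = 0%R.
Proof.
  intros Hre. unfold CSeries; simpl.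
  rewrite (Series_ext _ (fun _ => 0 * 0)%R) by (intros n; rewrite Hre; ring).
  rewrite Series_scal_l. ring.
Qed.

Lemma Re_fterm_imag_axis (c om : nat -> R) (j : nat) (y : R) :
  Re (fterm c om j (Ci * RtoC y)) = 0%R.
Proof.
  unfold fterm, Cminus, Cplus, Cmult, Cinv, Copp, Ci, RtoC; simpl. unfold Rdiv. ring.
Qed.

Lemma Fk_at_iw (c om : nat -> R) (gamma : R) (k : nat) :
  Fk c om gamma k (Ci * RtoC (om k)) = RtoC (c k ^ 2 / om k).
Proof.
  unfold Fk. apply injective_projections; simpl; ring.
Qed.

Lemma Im_Fk_imag_axis (c om : nat -> R) (gamma : R) (k : nat) (y : R) :
  gamma <> 0%R -> (0 < om k)%R -> (0 < y)%R ->
  Im (Fk c om gamma k (Ci * RtoC y)) = ((y - om k) * (2 / (gamma * y)))%R.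
Proof.
  intros Hgamma Hom Hy. unfold Fk.
  assert (Hseries :
    Re (CSeries (fun j => if Nat.eqb j k then 0 else fterm c om j (Ci * RtoC y))) = 0%R).
  { apply Re_CSeries_eq0. intros n. destruct (Nat.eqb n k); [reflexivity|].
    apply Re_fterm_imag_axis. }
  revert Hseries.
  generalize (CSeries (fun j => if Nat.eqb j k then 0 else fterm c om j (Ci * RtoC y))).
  intros [s1 s2] Hs1. simpl in Hs1. subst s1.
  unfold Cdiv, Cminus, Cplus, Cmult, Cinv, Copp, Ci, RtoC; simpl. field. repeat split; lra.
Qed.

Lemma Im_taylor_imag_step (F0 p r : C) (t : R) :
  Im (F0 + (Ci * RtoC t) * p + (Ci * RtoC t) * (Ci * RtoC t) * r)
  = (Im F0 + t * Re p - t * t * Im r)%R.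
Proof.
  destruct F0, p, r; simpl. ring.
Qed.

Section DerivativeLowerBound.

Variables (c om : nat -> R) (gamma : R) (k : nat) (R1 M : R) (p : C) (rho : C -> C).

Let iw := Ci * RtoC (om k).

Hypothesis gamma_gt0 : (0 < gamma)%R.
Hypothesis om_gt0 : (0 < om k)%R.
Hypothesis taylor : forall z,
  Fk c om gamma k z = Fk c om gamma k iw + (z - iw) * p + (z - iw) * (z - iw) * rho z.

Lemma Re_Fk_deriv_eq (t : R) : (0 < t)%R ->
  Re p = (2 / (gamma * (om k + t)) + t * Im (rho (Ci * RtoC (om k + t))))%R.
Proof.
  intros Ht.
  assert (Hstep : Ci * RtoC (om k + t) - iw = Ci * RtoC t)
    by (unfold iw; apply injective_projections; simpl; ring).
  (* F_k(i omega_k) is real, so Im of the Taylor identity is t Re p - t^2 Im rho. *)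
  assert (Him := f_equal Im (taylor (Ci * RtoC (om k + t)))).
  rewrite Hstep, Im_taylor_imag_step, Im_Fk_imag_axis in Him by lra.
  unfold iw in Him. rewrite Fk_at_iw in Him. simpl in Him.
  apply Rmult_eq_reg_l with t; [|lra]. rewrite Rmult_plus_distr_l.
  replace (om k + t - om k)%R with t in Him by ring. lra.
Qed.

Hypothesis R1_gt0 : (0 < R1)%R.
Hypothesis M_gt0 : (0 < M)%R.
Hypothesis rho_bounded : forall z, (Cmod (z - iw) <= R1)%R -> (Cmod (rho z) <= M)%R.

Lemma Re_Fk_deriv_ge : (/ (2 * gamma * om k) <= Re p)%R.
Proof.
  set (t := Rmin R1 (Rmin (om k) (/ (2 * gamma * om k * M)))).
  assert (Ht_le_R1 : (t <= R1)%R) by apply Rmin_l.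
  assert (Ht_le_om : (t <= om k)%R)
    by (eapply Rle_trans; [apply Rmin_r | apply Rmin_l]).
  assert (Ht_le_inv : (t <= / (2 * gamma * om k * M))%R)
    by (eapply Rle_trans; [apply Rmin_r | apply Rmin_r]).
  assert (Ht_gt0 : (0 < t)%R).
  { unfold t. repeat apply Rmin_pos; try lra.
    apply Rinv_0_lt_compat. repeat apply Rmult_lt_0_compat; lra. }
  assert (HtM : (t * M <= / (2 * gamma * om k))%R).
  { replace (/ (2 * gamma * om k))%R with (/ (2 * gamma * om k * M) * M)%R
      by (field; lra).
    apply Rmult_le_compat_r; lra. }
  assert (Hrho : (Rabs (Im (rho (Ci * RtoC (om k + t)))) <= M)%R).
  { eapply Rle_trans; [apply Rabs_Im_le_Cmod | apply rho_bounded].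
    replace (Ci * RtoC (om k + t) - iw) with (Ci * RtoC t)
      by (unfold iw; apply injective_projections; simpl; ring).
    rewrite Cmod_mult, Cmod_Ci, Cmod_R, Rabs_pos_eq; lra. }
  assert (Hmain : (/ (gamma * om k) <= 2 / (gamma * (om k + t)))%R).
  { replace (2 / (gamma * (om k + t)))%R with (/ (gamma * ((om k + t) / 2)))%R
      by (field; lra).
    apply Rinv_le_contravar; [|apply Rmult_le_compat_l; lra].
    apply Rmult_lt_0_compat; lra. }
  assert (Hremainder : (- (t * M) <= t * Im (rho (Ci * RtoC (om k + t))))%R)
    by (apply Rabs_le_between in Hrho; nra).
  replace (/ (gamma * om k))%R with (2 * / (2 * gamma * om k))%R in Hmain
    by (field; lra).
  rewrite (Re_Fk_deriv_eq t Ht_gt0). lra.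
Qed.

End DerivativeLowerBound.

Lemma Cmod_newton_step_le (c w gamma : R) (p : C) :
  (0 < gamma)%R -> (0 < w)%R -> (/ (2 * gamma * w) <= Re p)%R ->
  (Cmod (RtoC (c ^ 2 / w) / p) <= 2 * gamma * c ^ 2)%R.
Proof.
  intros Hgamma Hw Hp.
  assert (Hinv_gt0 : (0 < / (2 * gamma * w))%R)
    by (apply Rinv_0_lt_compat; repeat apply Rmult_lt_0_compat; lra).
  assert (Hmod : (/ (2 * gamma * w) <= Cmod p)%R).
  { eapply Rle_trans; [|apply re_le_Cmod]. eapply Rle_trans; [apply Hp | apply Rle_abs]. }
  assert (Hp_neq0 : p <> 0).
  { intros ->. rewrite Cmod_0 in Hmod. lra. }
  rewrite Cmod_div, Cmod_R, Rabs_pos_eq by (auto; apply Rdiv_le_0_compat; nra).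
  replace (2 * gamma * c ^ 2)%R with (c ^ 2 / w * / / (2 * gamma * w))%R
    by (field; lra).
  apply Rmult_le_compat_l; [apply Rdiv_le_0_compat; nra|].
  apply Rinv_le_contravar; lra.
Qed.

Lemma Cmod_sub_le_of_newton_disc (w q z : C) (r : R) :
  Re w = 0%R ->
  (r <= / 2 * Rabs (Re (w - q)))%R -> (Cmod (z - (w - q)) < r)%R ->
  (Cmod (z - w) <= 3 / 2 * Cmod q)%R.
Proof.
  intros Hw Hr Hz.
  assert (HRe : Rabs (Re (w - q)) = Rabs (Re q))
    by (destruct w, q; simpl in *; rewrite Hw, <- Rabs_Ropp; f_equal; ring).
  pose proof (re_le_Cmod q).
  replace (z - w) with ((z - (w - q)) + - q) by ring.
  eapply Rle_trans; [apply Cmod_triangle|]. rewrite Cmod_opp. lra.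
Qed.

Theorem proposition3p3
  (om c : nat -> R) (gamma : R) (k1 : nat)
  (R1 Rk M : nat -> R) (Fp : nat -> C) (rho : nat -> C -> C) (lam : nat -> C) :
  (0 < om O)%R ->
  (forall j, om j < om (S j))%R ->
  ex_series (fun j => c j ^ 2)%R ->
  (forall j, c j <> 0%R) ->
  (0 < gamma)%R ->
  (1 <= k1)%nat ->
  (forall k, (k1 <= k)%nat ->
     let iw := Ci * RtoC (om k) in
     (1 < om k)%R /\
     (om (S k) - om k > om k - om (k - 1)%nat)%R /\
     (0 < R1 k < om k - om (k - 1)%nat)%R /\
     (0 < Rk k)%R /\
     (* Fp k = F_k'(i omega_k) (complex derivative) *)
     @is_derive C_AbsRing C_NormedModule (Fk c om gamma k) iw (Fp k) /\
     (* rho_k defined by the Taylor remainder identity (continuous at i omega_k) *)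
     (forall z, Fk c om gamma k z =
                Fk c om gamma k iw + (z - iw) * Fp k + (z - iw) * (z - iw) * rho k z) /\
     continuous (rho k) iw /\
     (* M k = sup_{|z - i omega_k| <= R1 k} |rho_k z| *)
     is_lub (fun x => exists z, (Cmod (z - iw) <= R1 k)%R /\ x = Cmod (rho k z)) (M k) /\
     (0 < M k)%R /\
     (M k < gamma * om k * Cmod (Fp k) ^ 3
              / (c k ^ 2 * (gamma * om k * Cmod (Fp k) + 1) ^ 2))%R /\
     (let b := sqrt (Cmod (Fp k) / (4 * M k)) in
      let d := Cmod (Fk c om gamma k iw / Fp k) in
      b - sqrt (b ^ 2 - d) < sqrt (Rk k) < b + sqrt (b ^ 2 - d))%R /\
     (let lstar := iw - Fk c om gamma k iw / Fp k in
      (Rk k <= / 2 * Rabs (Re lstar))%R /\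
      (forall z, (Cmod (z - lstar) < Rk k)%R -> (Cmod (z - iw) <= R1 k)%R) /\
      (* lam k : the zero of f in the disc |z - lstar| < Rk k *)
      is_zero_f c om gamma (lam k) /\ (Cmod (lam k - lstar) < Rk k)%R)) ->
  exists C0 : R, exists K : nat, forall k, (K <= k)%nat ->
    (Cmod (lam k - Ci * RtoC (om k)) <= C0 * c k ^ 2)%R /\
    (Cmod (Cconj (lam k) - (- (Ci * RtoC (om k)))) <= C0 * c k ^ 2)%R.
Proof.
  intros _ _ _ _ Hgamma _ Hk.
  exists (3 * gamma)%R, k1. intros k Hk1. specialize (Hk k Hk1). cbv zeta in Hk.
  destruct Hk as (Hom & _ & [HR1 _] & _ & _ & Htaylor & _ & [Hlub _] & HM & _ & _ &
                  Hrk & _ & _ & Hlam).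
  assert (Hp := Re_Fk_deriv_ge c om gamma k (R1 k) (M k) (Fp k) (rho k)
                  Hgamma ltac:(lra) Htaylor HR1 HM
                  (fun z Hz => Hlub _ (ex_intro _ z (conj Hz eq_refl)))).
  rewrite Fk_at_iw in Hrk, Hlam.
  assert (Hclose : (Cmod (lam k - Ci * RtoC (om k)) <= 3 * gamma * c k ^ 2)%R).
  { eapply Rle_trans.
    - refine (Cmod_sub_le_of_newton_disc _ _ _ _ _ Hrk Hlam). simpl. ring.
    - pose proof (Cmod_newton_step_le (c k) (om k) gamma (Fp k) Hgamma ltac:(lra) Hp).
      lra. }
  split; [exact Hclose|].
  replace (Cconj (lam k) - - (Ci * RtoC (om k))) with (Cconj (lam k - Ci * RtoC (om k)))
    by (apply injective_projections; simpl; ring).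
  rewrite Cmod_conj. exact Hclose.
Qed.
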